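(* Let $f:X\to\mathcal G$ be convex and $x_0\in\operatorname{dom}f$. For $x\in X$, $t\in\mathbb R$ put $x_t=x_0+t(x-x_0)$ and $I(x)=\operatorname{cl}\operatorname{co}\bigcup_{t\in(0,1)}f(x_t)$. Then $x_0$ solves the scalarized Minty inequality (for all $x\in X$ with $f(x)\ne f(x_0)$ there exists $z^*\in C^-\setminus\{0\}$ with $\varphi_{f,z^*}(x)\neq-\infty$ and $\varphi'_{f,z^*}(x,x_0-x)<0$) if and only if for all $x\in\operatorname{dom} f$: $$f(x)\ne f(x_0)\ \Longrightarrow\ I(x)\supseteq f(x)\ \text{ and }\ I(x)\ne f(x).$$
   Context: $X$ real linear space, $Z$ real locally convex Hausdorff space with dual $Z^*$, $C\subseteq Z$ closed convex cone, $0\in C$, $C^-=\{z^*:z^*(c)\le0\ \forall c\in C\}$, $C^-\setminus\{0\}\neq\emptyset$. $\mathcal G=\{A\subseteq Z:A=\operatorname{cl}\operatorname{co}(A+C)\}$; $A\oplus B=\operatorname{cl}\{a+b\}$, $tA=\{ta\}$ ($t>0$). $f$ convex: $f(tx_1+(1-t)x_2)\supseteq tf(x_1)\oplus(1-t)f(x_2)$; $\operatorname{dom}f=\{x:f(x)\ne\emptyset\}$. On $\overline{\mathbb R}$: inf-addition $\dot+$ ($(-\infty)\dot+(+\infty)=+\infty$), $r\ominus s=\inf\{t\in\mathbb R:r\le s\dot+t\}$ ($\inf\emptyset=+\infty$). $\varphi_{f,z^*}(x)=\inf\{-z^*(z):z\in f(x)\}$ ($+\infty$ if $f(x)=\emptyset$),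 $\varphi'_{f,z^*}(x,u)=\inf_{t>0}\frac1t(\varphi_{f,z^*}(x+tu)\ominus\varphi_{f,z^*}(x))$. *)

From HB Require Import structures.
From mathcomp Require Import all_boot all_order all_algebra.
From mathcomp Require Import all_classical all_reals all_analysis.
Set Implicit Arguments. Unset Strict Implicit. Unset Printing Implicit Defensive.
Import Order.TTheory GRing.Theory Num.Theory.
Import numFieldNormedType.Exports.
Local Open Scope classical_set_scope.
Local Open Scope ring_scope.

Section defs.
Variable R : realType.

Definition msum (M : lmodType R) (A B : set M) : set M :=
  [set a + b | a in A & b in B].

Definition mscale (M : lmodType R) (t : R) (A : set M) : set M :=
  [set t *: a | a in A].

Definition conv_hull (M : lmodType R) (A : set M) : set M :=
  \bigcap_(B in [set B : set M | convex_set (B : set (convex_lmodType M)) /\ A `<=` B]) B.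

Definition oplus (Z : tvsType R) (A B : set Z) : set Z := closure (msum A B).

Definition closed_convex_cone (Z : tvsType R) (C : set Z) : Prop :=
  closed C /\ convex_set (C : set (convex_lmodType Z)) /\ C 0 /\
  (forall t c, 0 < t -> C c -> C (t *: c)).

Definition topdual (Z : tvsType R) (zs : Z -> R) : Prop :=
  linear (zs : Z -> R^o) /\ continuous zs.

Definition negdual (Z : tvsType R) (C : set Z) (zs : Z -> R) : Prop :=
  topdual zs /\ forall c, C c -> zs c <= 0.

Definition imG (Z : tvsType R) (C : set Z) (A : set Z) : Prop :=
  A = closure (conv_hull (msum A C)).

Definition sv_convex (X : lmodType R) (Z : tvsType R) (f : X -> set Z) : Prop :=
  forall x1 x2 (t : R), 0 < t < 1 ->
    oplus (mscale t (f x1)) (mscale (1 - t) (f x2)) `<=` f (t *: x1 + (1 - t) *: x2).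

Definition dom (X : lmodType R) (Z : tvsType R) (f : X -> set Z) : set X :=
  [set x | f x !=set0].

Definition Iset (X : lmodType R) (Z : tvsType R) (f : X -> set Z) (x0 x : X) : set Z :=
  closure (conv_hull (\bigcup_(t in [set t : R | (0 < t < 1)%R]) f (x0 + t *: (x - x0)))).

Local Open Scope ereal_scope.

(* r ⊖ s = inf { t in R : r <= s ∔ t }  (s ∔ t%:E needs no convention, t finite) *)
Definition ominus (r s : \bar R) : \bar R :=
  ereal_inf [set t%:E | t in [set t : R | r <= s + t%:E]].

(* φ_{f,z*}(x) = inf { -z*(z) : z in f x }, = +oo if f x is empty *)
Definition phi (X : lmodType R) (Z : tvsType R) (f : X -> set Z) (zs : Z -> R)
  (x : X) : \bar R := ereal_inf [set (- zs z)%:E | z in f x].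

Definition dphi (X : lmodType R) (Z : tvsType R) (f : X -> set Z) (zs : Z -> R)
  (x u : X) : \bar R :=
  ereal_inf [set (t^-1)%:E * ominus (phi f zs (x + t *: u)) (phi f zs x)
            | t in [set t : R | (0 < t)%R]].

End defs.

(* If the Minty inequality holds at x, then f x ⊆ I(x) always, since the points
   t a + (1 - t) b, b ∈ f x0, lie in f(x_t) and tend to a as t → 1.  If moreover
   I(x) = f(x), convexity of f places (1+t)^-1 z + t(1+t)^-1 a in f(x) for every
   z ∈ f(x + t(x0 - x)) and a ∈ f(x); taking infima gives
   φ(x + t(x0 - x)) ≥ φ(x), contradicting φ'(x, x0 - x) < 0.
   Conversely, a point w ∈ I(x) \ f(x) is strictly separated from the closed
   convex set f(x) = cl co(f(x) + C) by a continuous linear z* with z* ≤ c on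
   f(x) < z*(w); z* ≤ 0 on C because f(x) + C ⊆ f(x).  As w lies in the closed
   convex hull of the f(x_s), some z ∈ f(x_s) has z*(z) > c, so that
   φ_{f,z*}(x_s) < -c ≤ φ_{f,z*}(x) and the difference quotient is negative.
   The separation theorem is obtained from a Zorn-lemma proof of Hahn-Banach
   applied to the Minkowski functional of a convex neighbourhood. *)

From Pilot Require Import Defs.
From HB Require Import structures.
From mathcomp Require Import all_boot all_order all_algebra.
From mathcomp Require Import all_classical all_reals all_analysis.
From mathcomp Require Import ring lra.
Set Implicit Arguments.
Unset Strict Implicit.
Unset Printing Implicit Defensive.
Import Order.TTheory GRing.Theory Num.Theory.
Import numFieldNormedType.Exports.
Local Open Scope classical_set_scope.
Local Open Scope ring_scope.

Section Sublinear.
Variables (R : realType) (V : lmodType R).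

Definition sublinear (p : V -> R) :=
  (forall x y, p (x + y) <= p x + p y) /\
  (forall t x, 0 < t -> p (t *: x) = t * p x).

Lemma linear_functionalP (F : V -> R) : linear (F : V -> R^o) ->
  [/\ F 0 = 0, forall a u, F (a *: u) = a * F u & forall u v, F (u + v) = F u + F v].
Proof.
move=> Flin; have F0 : F 0 = 0.
  by have := Flin 1 0 0; rewrite scale1r addr0 [_ *: _]mul1r; lra.
split => // [a u|u v]; first by have := Flin a u 0; rewrite addr0 F0 addr0.
by have := Flin 1 u v; rewrite scale1r [_ *: _]mul1r.
Qed.

Section Properties.
Variables (p : V -> R) (hp : sublinear p).

Lemma sublinear0 : p 0 = 0.
Proof. by have := hp.2 2 0 (ltr0Sn _ _); rewrite scaler0; lra. Qed.

Lemma sublinearZ t x : 0 <= t -> p (t *: x) = t * p x.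
Proof.
rewrite le_eqVlt => /orP[/eqP <-|t0]; last exact: hp.2.
by rewrite scale0r mul0r sublinear0.
Qed.

Lemma sublinear_oppr_le x : - p (- x) <= p x.
Proof. by have := hp.1 x (- x); rewrite subrr sublinear0; lra. Qed.

(* A sublinear minorant of [p] whose linear minorants all agree with [p] at [y]
   (see [dir_reduceN]). *)
Definition dir_reduce (y x : V) : R :=
  inf [set p (x + t *: y) - t * p y | t in [set t : R | 0 <= t]].

Lemma dir_reduce_le y x t : 0 <= t -> dir_reduce y x <= p (x + t *: y) - t * p y.
Proof.
move=> t0; apply: ge_inf; last by exists t.
exists (- p (- x)) => _ [s s0 <-]; rewrite -(sublinearZ y s0).
by have := hp.1 (x + s *: y) (- x); rewrite addrC addKr; lra.
Qed.

Lemma dir_reduce_ge y x c :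
  (forall t, 0 <= t -> c <= p (x + t *: y) - t * p y) -> c <= dir_reduce y x.
Proof.
move=> h; apply: lb_le_inf; last by move=> _ [t t0 <-]; exact: h.
by exists (p (x + 0 *: y) - 0 * p y); exists 0 => /=.
Qed.

Lemma dir_reduce_le_self y x : dir_reduce y x <= p x.
Proof. by have := dir_reduce_le y x (lexx 0); rewrite scale0r addr0 mul0r subr0. Qed.

Lemma dir_reduceN y : dir_reduce y (- y) <= - p y.
Proof. by have := dir_reduce_le y (- y) ler01; rewrite scale1r addNr sublinear0 mul1r sub0r. Qed.

Lemma dir_reduce_sublinear y : sublinear (dir_reduce y).
Proof.
split=> [x1 x2|s x s0].
  suff h t1 : 0 <= t1 ->
      dir_reduce y (x1 + x2) - (p (x1 + t1 *: y) - t1 * p y) <= dir_reduce y x2.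
    suff : dir_reduce y (x1 + x2) - dir_reduce y x2 <= dir_reduce y x1 by lra.
    by apply: dir_reduce_ge => t t0; have := h t t0; lra.
  move=> t10; apply: dir_reduce_ge => t2 t20.
  have := dir_reduce_le y (x1 + x2) (addr_ge0 t10 t20).
  have := hp.1 (x1 + t1 *: y) (x2 + t2 *: y).
  by rewrite addrACA -scalerDl mulrDl; lra.
apply/eqP; rewrite eq_le; apply/andP; split.
  rewrite -ler_pdivrMl //; apply: dir_reduce_ge => t t0; rewrite ler_pdivrMl //.
  have := dir_reduce_le y (s *: x) (mulr_ge0 (ltW s0) t0).
  by rewrite -scalerA -scalerDr (sublinearZ _ (ltW s0)) mulrBr mulrA.
apply: dir_reduce_ge => t t0; rewrite -ler_pdivlMl //.
have := dir_reduce_le y x (divr_ge0 t0 (ltW s0)).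
have -> : s *: x + t *: y = s *: (x + (t / s) *: y).
  by rewrite scalerDr scalerA mulrCA mulfV ?gt_eqF // mulr1.
rewrite (sublinearZ _ (ltW s0)).
suff -> : s^-1 * (s * p (x + (t / s) *: y) - t * p y) =
          p (x + (t / s) *: y) - t / s * p y by [].
by field; rewrite gt_eqF.
Qed.

End Properties.

Definition minimal_sublinear (q : V -> R) :=
  sublinear q /\ forall r, sublinear r -> (forall x, r x <= q x) -> forall x, q x <= r x.

Lemma minimal_sublinear_linear q : minimal_sublinear q -> linear (q : V -> R^o).
Proof.
move=> [hq qmin].
(* Minimality of [q] against [dir_reduce q y] forces [q (- y) = - q y]. *)
have qN y : q (- y) = - q y.
  have := qmin _ (dir_reduce_sublinear hq y) (dir_reduce_le_self hq y) (- y).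
  by have := dir_reduceN hq y; have := sublinear_oppr_le hq y; lra.
have qD x y : q (x + y) = q x + q y.
  by have := hq.1 x y; have := hq.1 (x + y) (- y); rewrite addrK qN; lra.
move=> a x y; rewrite qD; congr (_ + _); apply: (_ : q (a *: x) = a * q x).
have [a0|a0] := leP 0 a; first exact: sublinearZ.
rewrite -[in LHS](opprK a) scaleNr qN (sublinearZ hq x) ?oppr_ge0 ?ltW //.
by rewrite mulNr opprK.
Qed.

Lemma chain_inf_sublinear (p0 : V -> R) (A : set (V -> R)) (a0 : V -> R) :
  A a0 -> (forall a, A a -> sublinear a /\ forall x, a x <= p0 x) ->
  (forall a b, A a -> A b -> (forall x, a x <= b x) \/ (forall x, b x <= a x)) ->
  let g x := inf [set a x | a in A] in
  sublinear g /\ forall a, A a -> forall x, g x <= a x.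
Proof.
move=> Aa0 hA Atot g.
have gle x a : A a -> g x <= a x.
  move=> Aa; apply: ge_inf; last by exists a.
  exists (- p0 (- x)) => _ [b Ab <-]; have [hb bp0] := hA b Ab.
  by have := sublinear_oppr_le hb x; have := bp0 (- x); lra.
have gge x c : (forall a, A a -> c <= a x) -> c <= g x.
  move=> h; apply: lb_le_inf; last by move=> _ [a Aa <-]; exact: h.
  by exists (a0 x), a0.
split; last by move=> a Aa x; exact: gle.
split=> [x y|t x t0].
  suff h a : A a -> g (x + y) - a x <= g y.
    suff : g (x + y) - g y <= g x by lra.
    by apply: gge => a Aa; have := h a Aa; lra.
  move=> Aa; apply: gge => b Ab; have [ha _] := hA a Aa; have [hb _] := hA b Ab.
  have [ab|ba] := Atot a b Aa Ab.
  - by have := gle (x + y) a Aa; have := ha.1 x y; have := ab y; lra.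
  - by have := gle (x + y) b Ab; have := hb.1 x y; have := ba x; lra.
apply/eqP; rewrite eq_le; apply/andP; split.
  rewrite -ler_pdivrMl //; apply: gge => a Aa; rewrite ler_pdivrMl //.
  by have := gle (t *: x) a Aa; rewrite ((hA a Aa).1.2 t x t0).
by apply: gge => a Aa; rewrite ((hA a Aa).1.2 t x t0) ler_pM2l //; exact: gle.
Qed.

Lemma exists_minimal_sublinear_le (p0 : V -> R) : sublinear p0 ->
  exists2 q, minimal_sublinear q & forall x, q x <= p0 x.
Proof.
move=> hp0.
pose T := {q : V -> R | sublinear q /\ forall x, q x <= p0 x}.
pose below (a b : T) := `[< forall x, sval b x <= sval a x >].
have [|a b c /asboolP ab /asboolP bc|A Atot|] :=
    @ZL_preorder T (exist _ p0 (conj hp0 (fun=> lexx _))) below.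
- by move=> a; apply/asboolP.
- by apply/asboolP => x; exact: le_trans (bc x) (ab x).
- have [[a0 A_a0]|A0] := pselect (A !=set0); last first.
    by exists (exist _ p0 (conj hp0 (fun=> lexx _))) => a Aa; case: A0; exists a.
  have Aa0 : (sval @` A) (sval a0) by exists a0.
  have hA : forall a, (sval @` A) a -> sublinear a /\ forall x, a x <= p0 x.
    by move=> _ [a _ <-]; exact: (svalP a).
  have Atot' a b : (sval @` A) a -> (sval @` A) b ->
      (forall x, a x <= b x) \/ (forall x, b x <= a x).
    move=> [{}a Aa <-] [{}b Ab <-].
    by have [/asboolP|/asboolP] := Atot a b Aa Ab; [right|left].
  have [hg gle] := chain_inf_sublinear Aa0 hA Atot'.
  have gp0 x : inf [set a x | a in sval @` A] <= p0 x.
    by apply: le_trans (gle _ Aa0 x) ((svalP a0).2 x).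
  exists (exist _ (fun x => inf [set a x | a in sval @` A]) (conj hg gp0)).
  by move=> a Aa; apply/asboolP => x /=; apply: gle; exists a.
- move=> [q [hq qp0]] qmax; exists q => //; split=> // r hr rq.
  have rp0 x : r x <= p0 x by exact: le_trans (rq x) (qp0 x).
  have /qmax /asboolP : below (exist _ q (conj hq qp0)) (exist _ r (conj hr rp0)).
    by apply/asboolP.
  exact.
Qed.

Lemma sublinear_linear_minorant (p : V -> R) (y : V) : sublinear p ->
  exists F : V -> R, [/\ linear (F : V -> R^o), forall x, F x <= p x & p y <= F y].
Proof.
move=> hp; have [q qmin qp] := exists_minimal_sublinear_le (dir_reduce_sublinear hp y).
have qlin := minimal_sublinear_linear qmin; have [_ qZ _] := linear_functionalP qlin.
exists q; split=> // [x|]; first exact: le_trans (qp x) (dir_reduce_le_self hp y x).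
have qN : q (- y) = - q y by rewrite -scaleN1r qZ mulN1r.
by have := qp (- y); have := dir_reduceN hp y; rewrite qN; lra.
Qed.

End Sublinear.

Section Convexity.
Variables (R : realType) (M : lmodType R).

Definition segment_closed (A : set M) :=
  forall x y t, A x -> A y -> 0 <= t <= 1 -> A (t *: x + (1 - t) *: y).

Lemma convex_setP (A : set M) :
  convex_set (A : set (convex_lmodType M)) <-> segment_closed A.
Proof.
split=> [h x y t Ax Ay /andP[t0 t1]|h x y l].
  by have := h x y (Itv01 t0 t1); rewrite !inE => /(_ Ax Ay).
by rewrite !inE => Ax Ay; apply: h => //; apply/andP; split; [exact: ge0|exact: le1].
Qed.

Lemma conv_hull_sub (A : set M) : A `<=` conv_hull A.
Proof. by move=> x Ax B [_ AB]; exact: AB. Qed.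

Lemma conv_hull_min (A B : set M) : segment_closed B -> A `<=` B -> conv_hull A `<=` B.
Proof. by move=> cB AB x; apply; split=> //; apply/convex_setP. Qed.

Lemma segment_closed_conv_hull (A : set M) : segment_closed (conv_hull A).
Proof.
move=> x y t hx hy t01 B [cB AB].
exact: (convex_setP B).1 cB _ _ _ (hx B (conj cB AB)) (hy B (conj cB AB)) t01.
Qed.

Lemma segment_closed_le (F : M -> R) (c : R) :
  linear (F : M -> R^o) -> segment_closed [set z | F z <= c].
Proof.
move=> /linear_functionalP[_ FZ FD] x y t /= Fx Fy /andP[t0 t1]; rewrite FD !FZ.
have : t * F x <= t * c by rewrite ler_wpM2l.
have : (1 - t) * F y <= (1 - t) * c by rewrite ler_wpM2l // subr_ge0.
lra.
Qed.

Lemma combD (t : R) (a b c d : M) :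
  t *: (a + b) + (1 - t) *: (c + d) = (t *: a + (1 - t) *: c) + (t *: b + (1 - t) *: d).
Proof. by rewrite !scalerDr addrACA. Qed.

Lemma combxx (t : R) (a : M) : t *: a + (1 - t) *: a = a.
Proof. by rewrite -scalerDl subrKC scale1r. Qed.

Lemma segmentE (s : R) (x y : M) :
  y + s *: (x - y) = s *: x + (1 - s) *: y.
Proof. by rewrite scalerBr scalerBl scale1r addrCA. Qed.

Lemma linear_le0_of_ray (F : M -> R) (a k : M) (c : R) :
  linear (F : M -> R^o) -> (forall t, 0 < t -> F (a + t *: k) <= c) -> F k <= 0.
Proof.
move=> /linear_functionalP[_ FZ FD] Fc; rewrite leNgt; apply/negP => Fk.
have := Fc ((`|c - F a| + 1) / F k); rewrite FD FZ divfK ?gt_eqF //.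
have := ler_norm (c - F a); have := normr_ge0 (c - F a).
by move=> h1 h2 /(_ (divr_gt0 (ltr_wpDl h1 ltr01) Fk)); lra.
Qed.

End Convexity.

Section Minkowski.
Variables (R : realType) (V : lmodType R) (D : set V).
Hypotheses (D_conv : segment_closed D) (D0 : D 0)
  (D_abs : forall x, exists l, 0 < l /\ D (l *: x)).

Definition minkowski (x : V) : R := inf [set l : R | 0 < l /\ D (l^-1 *: x)].

Lemma minkowski_le x l : 0 < l -> D (l^-1 *: x) -> minkowski x <= l.
Proof. by move=> l0 Dl; apply: ge_inf; [exists 0 => m [m0 _]; exact: ltW|]. Qed.

Lemma minkowski_ge x c :
  (forall l, 0 < l -> D (l^-1 *: x) -> c <= l) -> c <= minkowski x.
Proof.
move=> h; apply: lb_le_inf; last by move=> l [l0 Dl]; exact: h.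
have [l [l0 Dl]] := D_abs x; exists l^-1; split; first by rewrite invr_gt0.
by rewrite invrK.
Qed.

Lemma minkowski_le1 x : D x -> minkowski x <= 1.
Proof. by move=> Dx; apply: minkowski_le => //; rewrite invr1 scale1r. Qed.

Lemma minkowski_ge1 x : ~ D x -> 1 <= minkowski x.
Proof.
move=> Dx; apply: minkowski_ge => l l0 Dl; rewrite leNgt; apply/negP => l1; apply: Dx.
have l01 : 0 <= l <= 1 by rewrite !ltW.
by have := D_conv Dl D0 l01; rewrite scaler0 addr0 scalerA mulfV ?gt_eqF // scale1r.
Qed.

Lemma minkowski_sublinear : sublinear minkowski.
Proof.
split=> [x y|t x t0].
  suff h l : 0 < l -> D (l^-1 *: x) -> minkowski (x + y) - l <= minkowski y.
    suff : minkowski (x + y) - minkowski y <= minkowski x by lra.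
    by apply: minkowski_ge => l l0 Dl; have := h l l0 Dl; lra.
  move=> l0 Dl; apply: minkowski_ge => m m0 Dm.
  suff : minkowski (x + y) <= l + m by lra.
  have lm0 : 0 < l + m by exact: addr_gt0.
  apply: minkowski_le => //.
  have -> : (l + m)^-1 *: (x + y) =
      (l / (l + m)) *: (l^-1 *: x) + (1 - l / (l + m)) *: (m^-1 *: y).
    by rewrite !scalerA scalerDr; congr (_ + _); congr (_ *: _); field;
       rewrite !gt_eqF.
  apply: D_conv => //; apply/andP; split; first by rewrite divr_ge0 // ltW.
  by rewrite ler_pdivrMr // mul1r lerDl ltW.
apply/eqP; rewrite eq_le; apply/andP; split.
  rewrite -ler_pdivrMl //; apply: minkowski_ge => l l0 Dl.
  rewrite ler_pdivrMl //; apply: minkowski_le; first exact: mulr_gt0.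
  by rewrite scalerA invfM mulrAC mulVf ?gt_eqF // mul1r.
apply: minkowski_ge => l l0; rewrite scalerA => Dl.
rewrite -ler_pdivlMl //; apply: minkowski_le; first by rewrite mulr_gt0 // invr_gt0.
by rewrite invfM invrK mulrC.
Qed.

End Minkowski.

Section Separation.
Variables (R : realType) (Z : tvsType R).

Lemma line_continuous (u v : Z) : continuous (fun t : R^o => t *: u + v).
Proof.
move=> t; apply: (@continuous_comp R^o (Z * Z)%type Z (fun t => (t *: u, v))
  (fun z => z.1 + z.2)); last exact: add_continuous.
apply: (@cvg_pair _ _ _ _ (nbhs (t *: u)) (nbhs v)); last exact: cvg_cst.
apply: (@continuous_comp R^o (R^o * Z)%type Z (fun t => (t, u))
  (fun z => z.1 *: z.2)); last exact: scale_continuous.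
by apply: (@cvg_pair _ _ _ _ (nbhs t) (nbhs u)); [exact: cvg_id|exact: cvg_cst].
Qed.

Lemma affine_continuous (s : R) (a : Z) : continuous (fun y : Z => s *: (y - a)).
Proof.
move=> y; apply: (@continuous_comp Z (R^o * Z)%type Z (fun y => (s, y - a))
  (fun z => z.1 *: z.2)); last exact: scale_continuous.
apply: (@cvg_pair _ _ _ _ (nbhs (s : R^o)) (nbhs (y - a))); first exact: cvg_cst.
apply: (@continuous_comp Z (Z * Z)%type Z (fun y => (y, a))
  (fun z => z.1 - z.2)); last exact: sub_continuous.
by apply: (@cvg_pair _ _ _ _ (nbhs y) (nbhs a)); [exact: cvg_id|exact: cvg_cst].
Qed.

Lemma nbhs0_absorbing (W : set Z) x : nbhs 0 W -> exists l, 0 < l /\ W (l *: x).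
Proof.
move=> W0; have : nbhs (0 *: x + 0) W by rewrite scale0r addr0.
move=> /(@line_continuous x 0 0) /nbhs_ballP [e /= e0 he].
exists (e / 2); split; first by rewrite divr_gt0.
have := he (e / 2); rewrite /= addr0; apply.
by rewrite /ball /= sub0r normrN ger0_norm ?divr_ge0 ?ltW //; lra.
Qed.

Lemma linear_continuous_le1 (F : Z -> R) (W : set Z) :
  linear (F : Z -> R^o) -> nbhs 0 W -> (forall u, W u -> F u <= 1) -> continuous F.
Proof.
move=> /linear_functionalP[_ FZ FD] W0 FW z; apply/cvgrPdist_le => e e0.
have FB u v : F (u - v) = F u - F v by rewrite FD -scaleN1r FZ mulN1r.
have nW s : nbhs (s *: (z - z)) W by rewrite subrr scaler0.
near=> y.
have /FW : W (e^-1 *: (y - z)) by near: y; exact: (@affine_continuous e^-1 z z).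
have /FW : W (- e^-1 *: (y - z)) by near: y; exact: (@affine_continuous (- e^-1) z z).
rewrite !FZ FB mulNr -mulrN !ler_pdivrMl // !mulr1 => h1 h2.
by rewrite ler_norml; apply/andP; split; lra.
Unshelve. all: by end_near.
Qed.

Lemma convex_nbhs0_avoiding (K : set Z) (w : Z) : ~ closure K w ->
  exists W, [/\ nbhs 0 W, segment_closed W & forall u, W u -> ~ K (w - u)].
Proof.
move=> Kw; have [B [wB KB]] : exists B, nbhs w B /\ forall k, K k -> ~ B k.
  apply: contrapT => h; apply: Kw => B wB; apply: contrapT => BK; apply: h.
  by exists B; split=> // k Kk Bk; apply: BK; exists k.
have [Bs Bs_conv [Bs_open Bs_basis]] := @locally_convex R Z.
have [U [BsU Uw] UB] := Bs_basis w B wB.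
have /convex_setP U_conv : convex_set U by apply: Bs_conv; exact: mem_set.
exists [set u | U (w - u)]; split=> [||u Uu Ku]; last exact: KB _ Ku (UB _ Uu).
- have : nbhs (-1 *: (0 - w)) U.
    by rewrite sub0r scaleN1r opprK; apply: open_nbhs_nbhs; split=> //; exact: Bs_open.
  move=> /(@affine_continuous (-1) w 0) h.
  apply: (@filterS _ _ _ [set y | U (-1 *: (y - w))]) h => u /=.
  by rewrite scaleN1r opprB.
- move=> u1 u2 t U1 U2 t01 /=.
  have -> : w - (t *: u1 + (1 - t) *: u2) = t *: (w - u1) + (1 - t) *: (w - u2).
    by rewrite combD combxx opprD !scalerN.
  exact: U_conv.
Qed.

Lemma closure_conv_hull_le (A : set Z) (F : Z -> R) (c : R) :
  linear (F : Z -> R^o) -> continuous F -> (forall z, A z -> F z <= c) ->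
  closure (conv_hull A) `<=` [set z | F z <= c].
Proof.
move=> F_lin F_cont Ac; rewrite (closure_id [set z | F z <= c]).1; last first.
  exact: (continuous_closedP F).1 F_cont _ (@closed_le _ c).
by apply: closureS; apply: conv_hull_min Ac; exact: segment_closed_le.
Qed.

Lemma separation (K : set Z) (w : Z) :
  segment_closed K -> K !=set0 -> ~ closure K w ->
  exists2 F : Z -> R, linear (F : Z -> R^o) /\ continuous F &
    exists2 c, (forall k, K k -> F k <= c) & c < F w.
Proof.
move=> K_conv [a Ka] Kw; have [W [W0 W_conv WK]] := convex_nbhs0_avoiding Kw.
(* [D] is convex and absorbing and contains [0] but not [w - a], so a linear
   functional below its Minkowski functional that equals it at [w - a] separates. *)
pose D := [set k - a + u | k in K & u in W].
have WD u : W u -> D u by exists a => //; exists u => //; rewrite subrr add0r.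
have D0 : D 0 := WD 0 (nbhs_singleton W0).
have D_abs x : exists l, 0 < l /\ D (l *: x).
  by have [l [l0 Wl]] := nbhs0_absorbing x W0; exists l; split=> //; exact: WD.
have D_conv : segment_closed D.
  move=> _ _ t [k1 K1 [u1 W1 <-]] [k2 K2 [u2 W2 <-]] t01.
  exists (t *: k1 + (1 - t) *: k2); first exact: K_conv.
  exists (t *: u1 + (1 - t) *: u2); first exact: W_conv.
  by rewrite !combD combxx.
have Dwa : ~ D (w - a).
  move=> [k Kk [u Wu e]]; apply: WK Wu _.
  have -> : w = k - a + u + a by rewrite e subrK.
  by rewrite addrAC addrK subrK.
have [F [Flin Fp pF]] := sublinear_linear_minorant (w - a) (minkowski_sublinear D_conv D_abs).
have [_ FZ FD] := linear_functionalP Flin.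
have FB u v : F (u - v) = F u - F v by rewrite FD -scaleN1r FZ mulN1r.
have FD1 d : D d -> F d <= 1 by move=> Dd; exact: le_trans (Fp d) (minkowski_le1 Dd).
have Fwa : 1 <= F w - F a.
  by rewrite -FB; exact: le_trans (minkowski_ge1 D_conv D0 D_abs Dwa) pF.
exists F; first by split=> //; apply: linear_continuous_le1 Flin W0 _ => u /WD /FD1.
have [m [m0 Wm]] := nbhs0_absorbing (w - a) W0.
have : m <= m * (F w - F a) by rewrite ler_pMr.
exists (F a + 1 - m) => [k Kk|]; last by lra.
have /FD1 : D (k - a + m *: (w - a)) by exists k => //; exists (m *: (w - a)).
by rewrite FD FB FZ FB; lra.
Qed.

Lemma imG_separation (C A : set Z) (w : Z) :
  (forall t k, 0 < t -> C k -> C (t *: k)) -> imG C A -> A !=set0 -> ~ A w ->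
  exists2 F, negdual C F & exists2 c, (forall z, A z -> F z <= c) & c < F w.
Proof.
move=> C_cone AK [a Aa]; rewrite {1}AK => Kw.
have [k [Kk _]] : conv_hull (Defs.msum A C) `&` setT !=set0.
  by move: Aa; rewrite {1}AK; apply; exact: filterT.
have [F [F_lin F_cont] [c Fc cFw]] :=
  separation (@segment_closed_conv_hull _ _ (Defs.msum A C)) (ex_intro _ k Kk) Kw.
exists F.
  split=> // y Cy; apply: (linear_le0_of_ray (a := a) F_lin) => t t0.
  apply: Fc; apply: conv_hull_sub.
  by exists a => //; exists (t *: y) => //; exact: C_cone.
exists c => // z; rewrite {1}AK.
by apply: closure_conv_hull_le F_lin F_cont _ z => y /conv_hull_sub; exact: Fc.
Qed.

End Separation.

Section DifferenceQuotient.
Variable R : realType.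
Local Open Scope ereal_scope.

Lemma ominus_ley (r : \bar R) : ominus r +oo = -oo.
Proof.
apply: eq_ninfty => t; apply: ereal_inf_lbound; exists t => //=.
by rewrite addye // leey.
Qed.

Lemma ominus_le (r s : \bar R) (t : R) : r <= s + t%:E -> ominus r s <= t%:E.
Proof. by move=> h; apply: ereal_inf_lbound; exists t. Qed.

Lemma ominus_lt0 (r : \bar R) (s : R) : ominus r s%:E < 0 -> r < s%:E.
Proof.
move=> /ereal_inf_lt[_ [t /= rst <-]]; rewrite lte_fin => t0.
by apply: le_lt_trans rst _; rewrite -EFinD lte_fin; lra.
Qed.

Variables (X : lmodType R) (Z : tvsType R) (f : X -> set Z) (zs : Z -> R).

Lemma phi_le x z : f x z -> phi f zs x <= (- zs z)%:E.
Proof. by move=> fz; apply: ereal_inf_lbound; exists z. Qed.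

Lemma phi_set0 x : f x = set0 -> phi f zs x = +oo.
Proof. by move=> fx; rewrite /phi fx image_set0 ereal_inf0. Qed.

Lemma dphi_le x u (t : R) : (0 < t)%R ->
  dphi f zs x u <= t^-1%:E * ominus (phi f zs (x + t *: u)) (phi f zs x).
Proof. by move=> t0; apply: ereal_inf_lbound; exists t. Qed.

Lemma dphi_lt0 x u : dphi f zs x u < 0 ->
  exists2 t : R, (0 < t)%R & ominus (phi f zs (x + t *: u)) (phi f zs x) < 0.
Proof.
move=> /ereal_inf_lt[_ [t /= t0 <-] lt0]; exists t => //.
rewrite ltNge; apply: contraTN lt0 => om_ge0.
by rewrite -leNgt mule_ge0 // lee_fin invr_ge0 ltW.
Qed.

Lemma dphi_set0 x u : f x = set0 -> dphi f zs x u = -oo.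
Proof.
move=> fx; apply/eqP; rewrite -leeNy_eq; apply: le_trans (dphi_le x u ltr01) _.
by rewrite (phi_set0 fx) ominus_ley invr1 mul1e.
Qed.

End DifferenceQuotient.

Section MintyScalarization.
Variables (R : realType) (X : lmodType R) (Z : tvsType R) (f : X -> set Z) (x0 : X).

Lemma sv_convex_comb x1 x2 (t : R) a b : sv_convex f -> 0 < t < 1 ->
  f x1 a -> f x2 b -> f (t *: x1 + (1 - t) *: x2) (t *: a + (1 - t) *: b).
Proof.
move=> f_conv t01 fa fb; apply: f_conv => //; apply: subset_closure.
by exists (t *: a); [exists a|exists ((1 - t) *: b); [exists b|]].
Qed.

Lemma subset_Iset x : sv_convex f -> dom f x0 -> f x `<=` Iset f x0 x.
Proof.
move=> f_conv [b fb] a fa B; rewrite -{1}(subrK b a) -[a - b]scale1r.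
move=> /(@line_continuous _ _ (a - b) b 1) /nbhs_ballP [e /= e0 he].
have [t t01 te] : exists2 t : R, 0 < t < 1 & `|1 - t| < e.
  have [e1|e1] := leP e 1.
  - by exists (1 - e / 2); [apply/andP; split; lra|rewrite ger0_norm; lra].
  - by exists (1 / 2); [apply/andP; split; lra|rewrite ger0_norm; lra].
exists (t *: a + (1 - t) *: b); split.
  by apply: conv_hull_sub; exists t => //; rewrite segmentE; exact: sv_convex_comb.
by have := he t te; rewrite /= [t *: (a - b) + b]addrC segmentE.
Qed.

Lemma Iset_comb x (t : R) z a : sv_convex f -> 0 < t ->
  f (x + t *: (x0 - x)) z -> f x a ->
  Iset f x0 x ((1 + t)^-1 *: z + (1 - (1 + t)^-1) *: a).
Proof.
move=> f_conv t0 fz fa; apply: subset_closure; apply: conv_hull_sub.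
have t1 : 1 + t != 0 by rewrite gt_eqF //; lra.
have th01 : 0 < (1 + t)^-1 < 1.
  by apply/andP; split; [rewrite invr_gt0|rewrite invf_lt1]; lra.
exists (1 + t)^-1 => //; rewrite /=.
have -> : x0 + (1 + t)^-1 *: (x - x0) =
    (1 + t)^-1 *: (x + t *: (x0 - x)) + (1 - (1 + t)^-1) *: x.
  rewrite !segmentE scalerDr !scalerA -addrA -scalerDl addrC.
  have -> : (1 + t)^-1 * (1 - t) + (1 - (1 + t)^-1) = (1 + t)^-1 by field.
  by have -> : (1 + t)^-1 * t = 1 - (1 + t)^-1 by field.
exact: sv_convex_comb.
Qed.

Lemma Iset_neq_of_dphi_lt0 x zs : sv_convex f -> linear (zs : Z -> R^o) -> dom f x ->
  phi f zs x <> -oo%E -> (dphi f zs x (x0 - x) < 0)%E -> Iset f x0 x <> f x.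
Proof.
move=> f_conv /linear_functionalP[_ zsZ zsD] [a fa] phi_fin dphi_neg I_eq.
have [t t0] := dphi_lt0 dphi_neg.
case phiE : (phi f zs x) phi_fin (phi_le zs fa) => [ph| |] // _ _ /ominus_lt0.
move=> /ereal_inf_lt[_ [z fz <-]]; rewrite lte_fin => zs_lt.
set th := (1 + t)^-1.
have th01 : 0 < th < 1.
  by apply/andP; split; [rewrite invr_gt0|rewrite invf_lt1]; lra.
have comb_ge b : f x b -> ph <= - (th * zs z) - (1 - th) * zs b.
  move=> fb; have := Iset_comb f_conv t0 fz fb; rewrite I_eq => /(phi_le zs).
  by rewrite phiE lee_fin zsD !zsZ -/th; lra.
have : (((ph + th * zs z) / (1 - th))%:E <= phi f zs x)%E.
  apply/ereal_infP => _ [b fb <-]; rewrite lee_fin ler_pdivrMr; last by lra.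
  by have := comb_ge b fb; lra.
rewrite phiE lee_fin ler_pdivrMr => [bound|]; last by lra.
rewrite mulrBr mulr1 in bound.
have : th * (ph + zs z) <= 0 by rewrite mulrDr; lra.
by rewrite pmulr_rle0 //; lra.
Qed.

Lemma dphi_lt0_of_witness x zs (c s : R) z :
  ((- c)%:E <= phi f zs x)%E -> 0 < s < 1 ->
  f (x0 + s *: (x - x0)) z -> c < zs z -> (dphi f zs x (x0 - x) < 0)%E.
Proof.
move=> phi_ge /andP[s0 s1] fz czs; have s1' : 0 < 1 - s by lra.
have xs : x + (1 - s) *: (x0 - x) = x0 + s *: (x - x0).
  by rewrite !segmentE addrC subKr.
apply: le_lt_trans (dphi_le f zs x (x0 - x) s1') _.
apply: (@le_lt_trans _ _ (((1 - s)^-1)%:E * (c - zs z)%:E)%E).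
  apply: lee_wpmul2l; first by rewrite lee_fin invr_ge0 ltW.
  apply: ominus_le; rewrite xs; apply: le_trans (phi_le zs fz) _.
  have -> : (- zs z)%:E = ((- c)%:E + (c - zs z)%:E)%E by rewrite -EFinD addrA addNr add0r.
  exact: leeD2r.
by rewrite -EFinM lte_fin pmulr_rlt0 ?invr_gt0 //; lra.
Qed.

Lemma minty_of_Iset (C : set Z) (zs0 : Z -> R) x :
  (forall t k, 0 < t -> C k -> C (t *: k)) ->
  negdual C zs0 -> zs0 <> (fun=> 0) -> imG C (f x) ->
  (dom f x -> f x `<=` Iset f x0 x /\ Iset f x0 x <> f x) ->
  exists zs : Z -> R, negdual C zs /\ zs <> (fun=> 0) /\
    phi f zs x <> -oo%E /\ (dphi f zs x (x0 - x) < 0)%E.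
Proof.
move=> C_cone zs0_neg zs0_nz fx_imG hI.
have [fx0|/set0P[a fa]] := eqVneq (f x) set0.
  exists zs0; split=> //; split=> //.
  by rewrite (phi_set0 _ fx0) (dphi_set0 _ _ fx0).
have [fxI Ifx] := hI (ex_intro _ a fa).
have [w Iw fxw] : exists2 w, Iset f x0 x w & ~ f x w.
  apply: contrapT => h; apply: Ifx; apply/seteqP; split=> // z Iz.
  by apply: contrapT => fz; apply: h; exists z.
have [F F_neg [c F_fx cFw]] := imG_separation C_cone fx_imG (ex_intro _ a fa) fxw.
have [[F_lin F_cont] _] := F_neg.
have F_nz : F <> fun=> 0 by move=> F0; have := F_fx a fa; move: cFw; rewrite F0; lra.
have phi_ge : ((- c)%:E <= phi f F x)%E.
  by apply/ereal_infP => _ [z fz <-]; rewrite lee_fin lerN2; exact: F_fx.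
have [s s01 [z fz cz]] :
    exists2 s, 0 < s < 1 & exists2 z, f (x0 + s *: (x - x0)) z & c < F z.
  apply: contrapT => h.
  have IF : Iset f x0 x `<=` [set z | F z <= c].
    apply: closure_conv_hull_le F_lin F_cont _ => z [s s01 fz].
    by rewrite leNgt; apply/negP => cz; apply: h; exists s => //; exists z.
  by have /= := IF w Iw; lra.
exists F; split=> //; split=> //; split; last exact: dphi_lt0_of_witness phi_ge s01 fz cz.
by move=> phi_ninf; move: phi_ge; rewrite phi_ninf.
Qed.

End MintyScalarization.

Unset Implicit Arguments.
Set Strict Implicit.

Theorem mainTheorem14 (R : realType) (X : lmodType R) (Z : tvsType R)
  (C : set Z) (f : X -> set Z) (x0 : X) :
  hausdorff_space Z ->
  closed_convex_cone C ->
  (exists zs : Z -> R, negdual C zs /\ zs <> (fun _ => 0)) ->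
  (forall x, imG C (f x)) ->
  sv_convex f ->
  dom f x0 ->
  (forall x : X, f x <> f x0 ->
     exists zs : Z -> R, negdual C zs /\ zs <> (fun _ => 0) /\
       phi f zs x <> -oo%E /\ (dphi f zs x (x0 - x) < 0)%E)
  <->
  (forall x : X, dom f x -> f x <> f x0 ->
     f x `<=` Iset f x0 x /\ Iset f x0 x <> f x).
Proof.
move=> _ [_ [_ [_ C_cone]]] [zs0 [zs0_neg zs0_nz]] f_imG f_conv x0_dom; split.
- move=> minty x x_dom fx_neq.
  have [zs [[[zs_lin _] _] [_ [phi_fin dphi_neg]]]] := minty x fx_neq.
  split; first exact: subset_Iset.
  exact: Iset_neq_of_dphi_lt0 f_conv zs_lin x_dom phi_fin dphi_neg.
- move=> hI x fx_neq.
  exact: minty_of_Iset C_cone zs0_neg zs0_nz (f_imG x) (hI x ^~ fx_neq).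
Qed.
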